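(* In a combinatorial auction with a non-decreasing payment rule where all bidders play piecewise constant strategies, for every bidder $i$ and every valuation $v_i$ there exists a cell vertex $b_i^*$ of bidder $i$'s action space such that for every bid $b_i\in\mathbb{R}_{\ge0}^r$, $$\bar u^{\mathrm{OPT}}_i(v_i,b_i^* )\ge \bar u^{\mathrm{OPT}}_i(v_i,b_i).$$
   Context: A combinatorial auction sells goods $M$ to bidders $N$. Each bidder $i$ bids $b_i\in\mathbb{R}_{\ge0}^r$ on his $r$ bundles of interest (other bundles bid $0$) and has valuation $v_i$ with $v_i(K)\ge0$ and free disposal ($K\subseteq K'\Rightarrow v_i(K)\le v_i(K')$). An allocation $x$ gives each bidder one bundle $x_i$ (bundle of interest or $\emptyset$), pairwise disjoint; $X(b)$ is the set of allocations maximizing $\sum_i b_i(x_i)$, one chosen uniformly at random. A payment rule gives $p_i(b,x)\le b_i(x_i)$; utility is $v_i(x_i)-p_i(b,x)$. The rule is non-decreasing if for every $x$, every $i$ and all $b,b'$ with $x\in X(b)\cap X(b')$, $b_{-i}=b'_{-i}$, $b_i'\ge b_i$ coordinatewise, $p_i(b',x)\ge p_i(b,x)$. Valuations $V_j$ are independent random variables; strategies $s_j$ map valuations to bids and are piecewise constant (finitely many values), so $b_{-i}=s_{-i}(V_{-i})$ has finite support. Let $\Pi$ be the set of vectors in $\mathbb{R}^r$ whose coordinates are a permutation of $(1,\dots,r)$. For $\delta>0$, $\bar u^\delta_i(v_i,b_i,\pi)=\mathbb{E}_{b_{-i}}\big[\mathbb{E}_{x\in X(b_i+\delta\pi,b_{-i})}[v_i(x_i)-p_i(b,x)]\big]$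 with $b=(b_i,b_{-i})$ (inner expectation uniform), and $\bar u^{\mathrm{OPT}}_i(v_i,b_i)=\max_{\pi\in\Pi}\lim_{\delta\to0}\bar u^\delta_i(v_i,b_i,\pi)$. A cell of bidder $i$'s action space is a connected region $S\subseteq\mathbb{R}_{\ge0}^r$ such that for every $b_{-i}$ with positive probability there exists an allocation $x$ with $x\in X(b_i,b_{-i})$ for all $b_i\in S$; cells are convex polytopes and cell vertices are their vertices. *)

From HB Require Import structures.
From mathcomp Require Import all_boot all_order all_algebra all_fingroup.
From mathcomp Require Import all_classical all_reals all_analysis.
Set Implicit Arguments. Unset Strict Implicit. Unset Printing Implicit Defensive.
Import Order.TTheory GRing.Theory Num.Theory.
Import numFieldNormedType.Exports.
Local Open Scope classical_set_scope.
Local Open Scope ring_scope.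

Section Auction.
Variables (R : realType) (M : finType) (n r : nat).
(* bnd j k = the k-th bundle of interest of bidder j *)
Variable bnd : 'I_n -> 'I_r -> {set M}.

(* An allocation gives each bidder one of its bundles of interest (Some k)
   or the empty bundle (None). *)
Definition alloc := {ffun 'I_n -> option 'I_r}.

Definition bset (j : 'I_n) (o : option 'I_r) : {set M} :=
  if o is Some k then bnd j k else finset.set0.

Definition feasible (x : alloc) : bool :=
  [forall j, forall k, (j != k) ==> [disjoint bset j (x j) & bset k (x k)]].

Definition bid := 'rV[R]_r.
Definition profile := 'I_n -> bid.

Definition bid_nonneg (bi : bid) : Prop := forall k, 0 <= bi 0 k.
Definition profile_nonneg (b : profile) : Prop := forall j, bid_nonneg (b j).

Definition bidval (bi : bid) (o : option 'I_r) : R :=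
  if o is Some k then bi 0 k else 0.

Definition welfare (b : profile) (x : alloc) : R :=
  \sum_(j < n) bidval (b j) (x j).

Definition Xopt (b : profile) : {set alloc} :=
  [set x | feasible x &&
     [forall y : alloc, feasible y ==> (welfare b y <= welfare b x)]].

Variable p : 'I_n -> profile -> alloc -> R.

Definition payment_le_bid : Prop :=
  forall i b x, profile_nonneg b -> x \in Xopt b -> p i b x <= bidval (b i) (x i).

Definition nondecreasing_payment : Prop :=
  forall (x : alloc) (i : 'I_n) (b b' : profile),
    profile_nonneg b -> profile_nonneg b' ->
    x \in Xopt b -> x \in Xopt b' ->
    (forall j, j != i -> b j = b' j) ->
    (forall k, b i 0 k <= b' i 0 k) ->
    p i b x <= p i b' x.

Definition valuation (v : {set M} -> R) : Prop :=
  (forall K : {set M}, 0 <= v K) /\ (forall K K' : {set M}, K \subset K' -> v K <= v K').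

(* Distribution of the other bidders' bids induced by piecewise constant
   strategies: bidder j independently bids B j k with probability w j k,
   k ranging over a finite index set 'I_m.+1 (finite support). *)
Variable m : nat.
Variable w : 'I_n -> 'I_m.+1 -> R.
Variable B : 'I_n -> 'I_m.+1 -> bid.

Definition bid_distributions : Prop :=
  (forall j k, 0 <= w j k) /\ (forall j, \sum_(k < m.+1) w j k = 1) /\
  (forall j k, bid_nonneg (B j k)).

Variable i : 'I_n.

(* an outcome index c selects a support point for every bidder j <> i
   (c i is normalized to ord0 and irrelevant) *)
Definition prof (bi : bid) (c : {ffun 'I_n -> 'I_m.+1}) : profile :=
  fun j => if j == i then bi else B j (c j).

Definition prob (c : {ffun 'I_n -> 'I_m.+1}) : R :=
  \prod_(j < n | j != i) w j (c j).

Definition Ebid (f : {ffun 'I_n -> 'I_m.+1} -> R) : R :=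
  \sum_(c : {ffun 'I_n -> 'I_m.+1} | c i == ord0) prob c * f c.

Definition pivec (s : {perm 'I_r}) : bid := \row_k ((s k)%:R + 1).

Definition udelta (v : {set M} -> R) (bi pi : bid) (delta : R) : R :=
  Ebid (fun c =>
    let b := prof bi c in
    let bd := prof (bi + delta *: pi) c in
    (#|Xopt bd|%:R)^-1 *
      \sum_(x in Xopt bd) (v (bset i (x i)) - p i b x)).

Definition ulim (v : {set M} -> R) (bi : bid) (s : {perm 'I_r}) : R :=
  lim (udelta v bi (pivec s) @ 0^'+).

Definition uOPT (v : {set M} -> R) (bi : bid) : R :=
  \big[Num.max/ulim v bi 1%g]_(s : {perm 'I_r}) ulim v bi s.

Definition cell_property (S : set bid) : Prop :=
  (forall bi, S bi -> bid_nonneg bi) /\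
  forall c : {ffun 'I_n -> 'I_m.+1}, c i = ord0 -> 0 < prob c ->
    exists x : alloc, forall bi, S bi -> x \in Xopt (prof bi c).

Definition is_cell (S : set bid) : Prop :=
  connected S /\ cell_property S /\
  (forall S', connected S' -> cell_property S' -> S `<=` S' -> S' = S).

Definition is_vertex (S : set bid) (b : bid) : Prop :=
  S b /\ forall y z (t : R), S y -> S z -> 0 < t < 1 ->
    b = t *: y + (1 - t) *: z -> y = z.

Definition is_cell_vertex (b : bid) : Prop :=
  exists S, is_cell S /\ is_vertex S b.

End Auction.

From HB Require Import structures.
From mathcomp Require Import all_boot all_order all_algebra all_fingroup.
From mathcomp Require Import all_classical all_reals all_analysis.
From mathcomp Require Import lra ring.
Import Order.TTheory GRing.Theory Num.Theory.
Import numFieldNormedType.Exports.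
Local Open Scope classical_set_scope.
Local Open Scope ring_scope.

(* As delta -> 0+, the perturbed bid b_i + delta pi selects, among the
   welfare-maximizing allocations at b_i, those giving bidder i a bundle of
   largest pi-value; so u^delta is eventually constant and u^OPT(v_i, b_i) is a
   maximum of explicit expected utilities.
   Fix such a tie-broken allocation X c for every profile c of the other
   bidders. The bids at which every X c stays welfare-maximizing form a convex
   cell, whose coordinatewise infimum b* lies in the cell and is a vertex.
   Lowering the bid from b_i to b* keeps every X c optimal and can only lower
   payments; ranking the bundles by how much their bid was lowered (ties broken
   by pi) gives a pi' whose tie-break at b* selects the same allocations as pi at
   b_i, so u(b*, pi') >= u(b_i, pi). There are finitely many choices of X, and
   one whose vertex maximizes u^OPT is the required b*. *)

Lemma convex_comb_ge_eq {R : realFieldType} {a y z t : R} :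
  a <= y -> a <= z -> 0 < t < 1 -> a = t * y + (1 - t) * z -> y = a /\ z = a.
Proof. move=> ay az /andP[t0 t1] e; split; nra. Qed.

Section LexPerm.
Context {R : realDomainType} {r : nat}.
Variables (g : 'I_r -> R) (s : {perm 'I_r}).

Definition lex_lt (j l : 'I_r) : bool :=
  (g j < g l) || ((g j == g l) && (s j < s l)%N).

Lemma lex_lt_irr j : ~~ lex_lt j j.
Proof. by rewrite /lex_lt ltxx eqxx ltnn. Qed.

Lemma lex_lt_trans j l k : lex_lt j l -> lex_lt l k -> lex_lt j k.
Proof.
rewrite /lex_lt => /orP[jl|/andP[/eqP-> jl]] /orP[lk|/andP[/eqP<- lk]].
- by rewrite (lt_trans jl lk).
- by rewrite jl.
- by rewrite lk.
- by rewrite eqxx (ltn_trans jl lk) orbT.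
Qed.

Lemma lex_lt_total j l : j != l -> lex_lt j l || lex_lt l j.
Proof.
move=> jl; rewrite /lex_lt; case: (ltgtP (g j) (g l)) => //= _.
by rewrite -neq_ltn val_eqE (inj_eq perm_inj).
Qed.

Definition lex_rank (l : 'I_r) : nat := #|[pred j | lex_lt j l]|.

Lemma lex_rank_lt l : (lex_rank l < r)%N.
Proof.
rewrite -[X in (_ < X)%N]card_ord; apply/proper_card/properP.
by split; [exact/subset_predT | exists l; rewrite ?inE ?lex_lt_irr].
Qed.

Lemma lex_rank_mono j l : lex_lt j l -> (lex_rank j < lex_rank l)%N.
Proof.
move=> jl; apply/proper_card/properP; split.
  by apply/fintype.subsetP => k; rewrite !inE => /lex_lt_trans; apply.
by exists j; rewrite !inE ?lex_lt_irr.
Qed.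

Lemma lex_rank_inj : injective (fun l => Ordinal (lex_rank_lt l)).
Proof.
move=> j l /(congr1 val) /= e; apply/eqP; apply: contraT => /lex_lt_total.
by case/orP => /lex_rank_mono; rewrite e ltnn.
Qed.

Definition lex_perm : {perm 'I_r} := perm lex_rank_inj.

Lemma lex_perm_le j l :
  g j <= g l -> (g j = g l -> (s j <= s l)%N) -> (lex_perm j <= lex_perm l)%N.
Proof.
move=> gjl sjl; rewrite !permE /=; have [-> //|jl] := eqVneq j l.
apply/ltnW/lex_rank_mono; rewrite /lex_lt.
move: gjl; rewrite le_eqVlt => /orP[/eqP e|->//]; rewrite e eqxx ltxx /=.
by rewrite ltn_neqAle val_eqE (inj_eq perm_inj) jl sjl.
Qed.

End LexPerm.

Lemma near0_lexle {R : realFieldType} (a b x y : R) :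
  \forall t \near 0^'+,
    (a + t * x <= b + t * y) = (a < b) || ((a == b) && (x <= y)).
Proof.
have small (u d : R) : 0 < d -> \forall t \near 0^'+, t * u < d.
  have tu0 : t * u @[t --> 0^'+] --> 0.
    rewrite -[X in _ --> X](mul0r u).
    exact/cvg_at_right_filter/mulrr_continuous.
  exact: cvgr_lt tu0 d.
case: (ltgtP a b) => [ab|ba|<-] /=; near=> t.
- have : t * (x - y) < b - a by near: t; apply: small; rewrite subr_gt0.
  by move=> ?; apply/idP; lra.
- have : t * (y - x) < a - b by near: t; apply: small; rewrite subr_gt0.
  by move=> ?; apply/negbTE; rewrite -ltNge; lra.
- by rewrite lerD2l ler_pM2l.
Unshelve. all: by end_near.
Qed.

Lemma convex_connected {R : realType} {V : normedModType R} (A : set V) a :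
  A a -> (forall y z t, A y -> A z -> 0 <= t <= 1 -> A (t *: y + (1 - t) *: z)) ->
  connected A.
Proof.
move=> Aa conv.
have -> : A = \bigcup_(y in A) ((fun t : R => a + t *: (y - a)) @` `[0, 1]).
  apply/seteqP; split => [y Ay|y [z Az [t t01 <-]]].
    exists y => //; exists 1; first by rewrite /= in_itv /= ler01 lexx.
    by rewrite scale1r addrC subrK.
  have -> : a + t *: (z - a) = t *: z + (1 - t) *: a.
    by rewrite scalerBr scalerBl scale1r addrCA.
  by apply: conv => //; move: t01; rewrite /= in_itv.
apply: bigcup_connected.
  exists a => y Ay; exists 0; first by rewrite /= in_itv /= lexx ler01.
  by rewrite scale0r addr0.
move=> y Ay; apply: connected_continuous_connected; first exact: segment_connected.
apply: continuous_subspaceT => t; apply: cvgD; first exact: cvg_cst.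
exact: scalel_continuous.
Qed.

Section Auction.
Context {R : realType} {M : finType} {n r m : nat}.
Context {bnd : 'I_n -> 'I_r -> {set M}} {p : 'I_n -> profile R n r -> alloc n r -> R}.
Context {w : 'I_n -> 'I_m.+1 -> R} {B : 'I_n -> 'I_m.+1 -> bid R r}.
Variable i : 'I_n.

Local Notation bidR := (bid R r).
Local Notation allocation := (alloc n r).
Local Notation outcome := {ffun 'I_n -> 'I_m.+1}.
Local Notation selection := {ffun outcome -> allocation}.
Local Notation Xprof b c := (Xopt bnd (prof B i b c)).

Lemma bidvalD (a b : bidR) o : bidval (a + b) o = bidval a o + bidval b o.
Proof. by case: o => [k|] /=; rewrite ?mxE ?addr0. Qed.

Lemma bidvalB (a b : bidR) o : bidval (a - b) o = bidval a o - bidval b o.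
Proof. by case: o => [k|] /=; rewrite ?mxE ?subr0. Qed.

Lemma bidvalZ t (a : bidR) o : bidval (t *: a) o = t * bidval a o.
Proof. by case: o => [k|] /=; rewrite ?mxE ?mulr0. Qed.

Definition welfare_others (c : outcome) (x : allocation) : R :=
  \sum_(j < n | j != i) bidval (B j (c j)) (x j).

Lemma welfare_prof (b : bidR) c x :
  welfare (prof B i b c) x = bidval b (x i) + welfare_others c x.
Proof.
rewrite /welfare (bigD1 i) //= /prof eqxx; congr (_ + _).
by apply: eq_bigr => j /negbTE ->.
Qed.

Lemma XoptP (b : profile R n r) x :
  reflect (feasible bnd x /\ forall y, feasible bnd y -> welfare b y <= welfare b x)
          (x \in Xopt bnd b).
Proof.
rewrite inE; apply: (iffP andP) => -[fx xmax]; split => //.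
  by move=> y fy; move/forallP/(_ y): xmax; rewrite fy.
by apply/forallP => y; apply/implyP => /xmax.
Qed.

Lemma Xopt_welfare_eq {b : profile R n r} {x y} :
  x \in Xopt bnd b -> y \in Xopt bnd b -> welfare b x = welfare b y.
Proof. by move=> /XoptP[fx xmax] /XoptP[fy ymax]; apply/eqP; rewrite eq_le xmax ?ymax. Qed.

Lemma Xopt_exists (b : profile R n r) : exists x, x \in Xopt bnd b.
Proof.
pose x0 : allocation := [ffun _ => None].
have fx0 : feasible bnd x0.
  apply/forallP => j; apply/forallP => k; apply/implyP => _.
  by rewrite !ffunE /= -setI_eq0 finset.set0I.
have [x fx xmax] := @arg_maxP _ _ _ x0 (feasible bnd) (welfare b) fx0.
by exists x; apply/XoptP; split => // y /xmax.
Qed.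

Lemma Xopt_prof_same_bundle {b b' : bidR} {c} {x y : allocation} :
  x \in Xprof b c -> x \in Xprof b' c -> y i = x i ->
  (y \in Xprof b c) = (y \in Xprof b' c).
Proof.
suff imp b1 b2 : x \in Xprof b1 c -> x \in Xprof b2 c -> y i = x i ->
    y \in Xprof b1 c -> y \in Xprof b2 c.
  by move=> xb xb' yx; apply/idP/idP; apply: imp.
move=> x1 x2 yx y1; have /XoptP[fy _] := y1; have /XoptP[_ x2max] := x2.
have := Xopt_welfare_eq x1 y1; rewrite !welfare_prof yx => /addrI others_eq.
apply/XoptP; split => // z fz.
by rewrite (le_trans (x2max z fz)) // !welfare_prof yx others_eq.
Qed.

Definition pival (s : {perm 'I_r}) (o : option 'I_r) : R := bidval (pivec R s) o.

Lemma pival_Some s k : pival s (Some k) = (s k)%:R + 1.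
Proof. by rewrite /pival /= mxE. Qed.

Lemma pival_ge0 s o : 0 <= pival s o.
Proof. by case: o => [k|] //; rewrite pival_Some addr_ge0. Qed.

Lemma pival_inj s : injective (pival s).
Proof.
have Some_neq0 k : pival s (Some k) != 0 by rewrite pival_Some paddr_eq0 ?oner_eq0 ?andbF.
case=> [k|] [l|] //; rewrite ?pival_Some.
- by move/addIr/eqP; rewrite eqr_nat => /eqP/val_inj/perm_inj ->.
- by move/eqP; rewrite -pival_Some (negbTE (Some_neq0 k)).
- by move/esym/eqP; rewrite -pival_Some (negbTE (Some_neq0 l)).
Qed.

Definition tieXopt (b : bidR) s (c : outcome) : {set allocation} :=
  [set x in Xprof b c | [forall z in Xprof b c, pival s (z i) <= pival s (x i)]].

Lemma tieXoptP b s c (x : allocation) :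
  reflect (x \in Xprof b c /\ forall z, z \in Xprof b c -> pival s (z i) <= pival s (x i))
          (x \in tieXopt b s c).
Proof.
apply: (iffP setIdP) => -[xopt xmax]; split => //.
  by move=> z zopt; move/forall_inP: xmax; apply.
by apply/forall_inP.
Qed.

Lemma tieXopt_Xopt {b s c} {x : allocation} : x \in tieXopt b s c -> x \in Xprof b c.
Proof. by case/tieXoptP. Qed.

Lemma tieXopt_bundle {b s c} {x : allocation} (y : allocation) :
  x \in tieXopt b s c ->
  (y \in tieXopt b s c) = (y \in Xprof b c) && (y i == x i).
Proof.
move=> /tieXoptP[xopt xmax]; apply/tieXoptP/andP => [[yopt ymax]|[yopt /eqP->]].
  split => //; apply/eqP/(pival_inj s)/eqP.
  by rewrite eq_le xmax ?ymax.
by split.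
Qed.

Definition lex_welfare_le b s c (z y : allocation) : bool :=
  let W := welfare (prof B i b c) in
  (W z < W y) || ((W z == W y) && (pival s (z i) <= pival s (y i))).

Lemma tieXopt_lexP b s c (y : allocation) :
  reflect (feasible bnd y /\ forall z, feasible bnd z -> lex_welfare_le b s c z y)
          (y \in tieXopt b s c).
Proof.
apply: (iffP (tieXoptP _ _ _ _)) => [[yopt ymax]|[fy ylex]].
  have /XoptP[fy ywel] := yopt; split => // z fz; rewrite /lex_welfare_le /=.
  have := ywel z fz; rewrite le_eqVlt => /orP[/eqP Wzy|->//].
  rewrite Wzy ltxx eqxx /=; apply: ymax; apply/XoptP; split => // x fx.
  by rewrite Wzy; exact: ywel.
have yopt : y \in Xprof b c.
  apply/XoptP; split => // z fz.
  by case/orP: (ylex z fz) => [/ltW|/andP[/eqP-> _]].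
split => // z zopt; have /XoptP[fz _] := zopt.
by move: (ylex z fz); rewrite /lex_welfare_le /= (Xopt_welfare_eq zopt yopt) ltxx eqxx.
Qed.

Lemma Xopt_perturbed b s c :
  \forall t \near 0^'+, Xprof (b + t *: pivec R s) c = tieXopt b s c.
Proof.
have lex (zy : allocation * allocation) : \forall t \near 0^'+,
    (welfare (prof B i (b + t *: pivec R s) c) zy.1 <=
     welfare (prof B i (b + t *: pivec R s) c) zy.2) = lex_welfare_le b s c zy.1 zy.2.
  case: zy => z y /=; rewrite /lex_welfare_le /=.
  have := near0_lexle (welfare (prof B i b c) z) (welfare (prof B i b c) y)
    (pival s (z i)) (pival s (y i)).
  apply: filterS => t <-.
  rewrite !welfare_prof !bidvalD !bidvalZ.
  by rewrite (addrAC (bidval b (z i))) (addrAC (bidval b (y i))).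
apply: filterS (filter_forall _ lex) => t lex_t.
apply/setP => y; apply/XoptP/tieXopt_lexP => -[fy ymax]; split => // z /ymax.
  by rewrite (lex_t (z, y)).
by rewrite -(lex_t (z, y)).
Qed.

Lemma Xopt_shift_same_bundle {b : bidR} {s t c} {x y : allocation} : t != 0 ->
  x \in Xprof b c -> y \in Xprof b c ->
  x \in Xprof (b + t *: pivec R s) c -> y \in Xprof (b + t *: pivec R s) c ->
  x i = y i.
Proof.
move=> t0 xb yb xt yt; apply: (pival_inj s); apply: (mulfI t0).
have := Xopt_welfare_eq xt yt; have := Xopt_welfare_eq xb yb.
by rewrite !welfare_prof !bidvalD !bidvalZ /pival; lra.
Qed.

Lemma tieXopt_exists b s c : exists x, x \in tieXopt b s c.
Proof.
have [t <-] := filter_ex (Xopt_perturbed b s c).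
exact: Xopt_exists.
Qed.

Definition tie_utility (v : {set M} -> R) b s (c : outcome) : R :=
  (#|tieXopt b s c|%:R)^-1 *
    \sum_(x in tieXopt b s c) (v (bset bnd i (x i)) - p i (prof B i b c) x).

Lemma ulimE v b s : ulim bnd p w B i v b s = Ebid w i (tie_utility v b s).
Proof.
apply: cvg_lim; first exact: Rhausdorff.
apply: cvg_near_cst; apply: filterS (filter_forall _ (Xopt_perturbed b s)) => t Xt.
by apply: eq_bigr => c _; rewrite /= Xt.
Qed.

Definition optimal_region (X : selection) : set bidR := fun b =>
  bid_nonneg b /\
  forall c : outcome, c i = ord0 -> 0 < prob w i c -> X c \in Xprof b c.

Lemma welfare_prof_conv (y z : bidR) t c x :
  welfare (prof B i (t *: y + (1 - t) *: z) c) x =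
  t * welfare (prof B i y c) x + (1 - t) * welfare (prof B i z c) x.
Proof. by rewrite !welfare_prof bidvalD !bidvalZ; ring. Qed.

Lemma optimal_region_conv X y z t :
  optimal_region X y -> optimal_region X z -> 0 <= t <= 1 ->
  optimal_region X (t *: y + (1 - t) *: z).
Proof.
move=> [y0 yopt] [z0 zopt] /andP[t0 t1]; rewrite -subr_ge0 in t1.
split=> [k|c ci pc]; first by rewrite !mxE addr_ge0 ?mulr_ge0.
have /XoptP[fX ymax] := yopt c ci pc; have /XoptP[_ zmax] := zopt c ci pc.
apply/XoptP; split => // x fx; rewrite !welfare_prof_conv.
by rewrite lerD // ler_wpM2l // ?ymax ?zmax.
Qed.

Definition region_corner (X : selection) : bidR :=
  \row_k inf [set b 0 k | b in optimal_region X].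

Lemma region_coord_has_inf {X b} : optimal_region X b ->
  forall k, has_inf [set b' 0 k | b' in optimal_region X].
Proof. by move=> Xb k; split; [exists (b 0 k), b | exists 0 => _ [b' [b'_ge0 _] <-]]. Qed.

Lemma region_corner_le {X b} : optimal_region X b -> forall k, region_corner X 0 k <= b 0 k.
Proof.
move=> Xb k; rewrite mxE; apply: ge_inf; last by exists b.
by case: (region_coord_has_inf Xb k).
Qed.

Section RegionCorner.
Context {X : selection} {b0 : bidR}.
Hypothesis Xb0 : optimal_region X b0.

Lemma region_corner_ge0 : bid_nonneg (region_corner X).
Proof.
move=> k; rewrite mxE; apply: lb_le_inf; first by exists (b0 0 k), b0.
by move=> _ [b [b_ge0 _] <-].
Qed.

Lemma region_corner_approx o e : 0 < e ->
  exists2 b, optimal_region X b & bidval b o <= bidval (region_corner X) o + e.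
Proof.
move=> e0; case: o => [k|] /=; last by exists b0; rewrite // add0r ltW.
have [_ [b Xb <-] be] := inf_adherent e0 (region_coord_has_inf Xb0 k).
by exists b => //; rewrite mxE ltW.
Qed.

Lemma region_corner_in : optimal_region X (region_corner X).
Proof.
split=> [|c ci pc]; first exact: region_corner_ge0.
have /XoptP[fX _] := Xb0.2 c ci pc.
apply/XoptP; split => // z fz; apply/ler_addgt0Pr => e e0.
(* W_corner z <= W_b z <= W_b (X c) <= W_corner (X c) + e, for a b in the
   region nearly attaining the infimum on the bundle of X c. *)
have [b Xb bX] := region_corner_approx (X c i) e e0.
have /XoptP[_ bmax] := Xb.2 c ci pc.
have corner_z : welfare (prof B i (region_corner X) c) z <= welfare (prof B i b c) z.
  rewrite !welfare_prof lerD2r; case: (z i) => [k|] //=.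
  exact: region_corner_le Xb _.
apply: (le_trans corner_z); apply: (le_trans (bmax z fz)).
by rewrite !welfare_prof addrAC lerD2r.
Qed.

Lemma region_corner_vertex : is_vertex (optimal_region X) (region_corner X).
Proof.
split=> [|y z t Xy Xz t01 yz]; first exact: region_corner_in.
apply/rowP => k.
have [-> ->] // : y 0 k = region_corner X 0 k /\ z 0 k = region_corner X 0 k.
apply: (convex_comb_ge_eq (region_corner_le Xy k) (region_corner_le Xz k) t01).
by rewrite {1}yz !mxE.
Qed.

End RegionCorner.

Definition tie_selection (X : selection) (bi : bidR) s : Prop :=
  bid_nonneg bi /\
  forall c : outcome, c i = ord0 -> 0 < prob w i c -> X c \in tieXopt bi s c.

Lemma tie_selection_exists bi s : bid_nonneg bi -> exists X, tie_selection X bi s.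
Proof.
move=> bi0; exists [ffun c => xchoose (tieXopt_exists bi s c)].
by split=> // c _ _; rewrite ffunE; exact: xchooseP.
Qed.

Definition corner_perm (X : selection) (bi : bidR) s : {perm 'I_r} :=
  lex_perm (fun k => (bi - region_corner X) 0 k) s.

Lemma pival_lex_perm_le (d : bidR) s o o' : bid_nonneg d ->
  bidval d o <= bidval d o' -> (bidval d o = bidval d o' -> pival s o <= pival s o') ->
  pival (lex_perm (fun k => d 0 k) s) o <= pival (lex_perm (fun k => d 0 k) s) o'.
Proof.
move=> d_ge0; case: o => [j|] dle pile; last exact: pival_ge0.
case: o' dle pile => [l|] dle pile.
  rewrite !pival_Some lerD2r ler_nat; apply: lex_perm_le => // e.
  by move: (pile e); rewrite !pival_Some lerD2r ler_nat.
have dj0 : d 0 j = 0 by apply/eqP; rewrite eq_le d_ge0 andbT; exact: dle.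
by have := pile dj0; have := ler0n R (s j); rewrite pival_Some /pival /=; lra.
Qed.

Hypothesis B_dist : bid_distributions w B.
Hypothesis p_nondecr : nondecreasing_payment bnd p.

Lemma prof_nonneg b c : bid_nonneg b -> profile_nonneg (prof B i b c).
Proof. by move=> b0 j; rewrite /prof; case: ifP => // _; exact: B_dist.2.2. Qed.

Lemma Ebid_le (f g : outcome -> R) :
  (forall c : outcome, c i = ord0 -> 0 < prob w i c -> f c <= g c) ->
  Ebid w i f <= Ebid w i g.
Proof.
move=> fg; apply: ler_sum => c /eqP ci.
have : 0 <= prob w i c by apply: prodr_ge0 => j _; exact: B_dist.1.
rewrite le_eqVlt => /orP[/eqP <-|pc]; first by rewrite !mul0r.
by apply: ler_wpM2l; [exact: ltW | exact: fg].
Qed.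

Section Selection.
Context {X : selection} {bi : bidR} {s : {perm 'I_r}}.
Hypothesis Xsel : tie_selection X bi s.

Lemma selection_region : optimal_region X bi.
Proof. by case: Xsel => bi0 Xtie; split=> // c ci pc; apply/tieXopt_Xopt/Xtie. Qed.

Lemma selection_perturbed_region :
  exists2 t, 0 < t & optimal_region X (bi + t *: pivec R s).
Proof.
case: Xsel => bi0 Xtie.
have near_t : \forall t \near 0^'+,
    0 < t /\ forall c, Xprof (bi + t *: pivec R s) c = tieXopt bi s c.
  near=> t; split; first by near: t; exact: nbhs_right_gt.
  by near: t; exact: filter_forall _ (Xopt_perturbed bi s).
have [t [t0 Xt]] := filter_ex near_t.
exists t => //; split=> [k|c ci pc]; last by rewrite Xt; exact: Xtie.
rewrite !mxE addr_ge0 // mulr_ge0 ?ltW // -pival_Some; exact: pival_ge0.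
Unshelve. all: by end_near.
Qed.

Lemma selection_region_maximal S : cell_property bnd w B i S ->
  optimal_region X `<=` S -> S `<=` optimal_region X.
Proof.
move=> [S_ge0 S_common] XS b Sb; split=> [|c ci pc]; first exact: S_ge0.
have [t t0 Xt] := selection_perturbed_region.
have Xbi := selection_region.
have [x xS] := S_common c ci pc.
have Xx : X c i = x i.
  apply: (Xopt_shift_same_bundle (lt0r_neq0 t0) (Xbi.2 c ci pc) (xS _ (XS _ Xbi))).
    exact: Xt.2.
  exact: xS _ (XS _ Xt).
by rewrite -(Xopt_prof_same_bundle (xS _ (XS _ Xbi)) (xS b Sb) Xx); exact: Xbi.2.
Qed.

Lemma selection_region_cell : is_cell bnd w B i (optimal_region X).
Proof.
have Xcell : cell_property bnd w B i (optimal_region X).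
  by split=> [b [b_ge0 _]|c ci pc] //; exists (X c) => b [_]; apply.
split; first exact: convex_connected selection_region (@optimal_region_conv X).
split=> // S _ S_cell XS; apply/seteqP; split=> //.
exact: selection_region_maximal.
Qed.

Lemma selection_corner_cell_vertex : is_cell_vertex bnd w B i (region_corner X).
Proof.
exists (optimal_region X); split; first exact: selection_region_cell.
exact: region_corner_vertex selection_region.
Qed.

Lemma corner_tie_selection {c : outcome} : c i = ord0 -> 0 < prob w i c ->
  X c \in tieXopt (region_corner X) (corner_perm X bi s) c.
Proof.
move=> ci pc; have /tieXoptP[Xbi Xbi_max] := Xsel.2 c ci pc.
have Xcorner := (region_corner_in selection_region).2 c ci pc.
apply/tieXoptP; split=> // z zcorner.
have /XoptP[fz _] := zcorner; have /XoptP[_ Xbi_wel] := Xbi.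
have := Xbi_wel z fz; have := Xopt_welfare_eq Xcorner zcorner.
rewrite !welfare_prof => Wcorner Wbi.
apply: pival_lex_perm_le.
- by move=> k; rewrite 2!mxE subr_ge0; exact: region_corner_le selection_region k.
- by rewrite !bidvalB; lra.
rewrite !bidvalB => e; apply: Xbi_max; apply/XoptP; split=> // y fy.
by rewrite (le_trans (Xbi_wel y fy)) // !welfare_prof; lra.
Qed.

Lemma corner_tieXopt (c : outcome) : c i = ord0 -> 0 < prob w i c ->
  tieXopt (region_corner X) (corner_perm X bi s) c = tieXopt bi s c.
Proof.
move=> ci pc; have Xc := Xsel.2 c ci pc; have Xcorner := corner_tie_selection ci pc.
apply/setP => y; rewrite (tieXopt_bundle _ Xcorner) (tieXopt_bundle _ Xc).
have [yX|] := eqVneq (y i) (X c i); last by rewrite !andbF.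
by rewrite !andbT (Xopt_prof_same_bundle (tieXopt_Xopt Xcorner) (tieXopt_Xopt Xc) yX).
Qed.

Lemma tie_utility_corner_ge v (c : outcome) : c i = ord0 -> 0 < prob w i c ->
  tie_utility v bi s c <= tie_utility v (region_corner X) (corner_perm X bi s) c.
Proof.
move=> ci pc; rewrite /tie_utility corner_tieXopt //.
apply: ler_wpM2l; first by rewrite invr_ge0.
apply: ler_sum => y ytie; rewrite lerB //.
have ybi := tieXopt_Xopt ytie.
have ycorner : y \in Xprof (region_corner X) c.
  by apply: (@tieXopt_Xopt _ (corner_perm X bi s)); rewrite corner_tieXopt.
apply: p_nondecr => //.
- exact/prof_nonneg/(region_corner_ge0 selection_region).
- exact/prof_nonneg/Xsel.1.
- by move=> j /negbTE ji; rewrite /prof ji.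
- by move=> k; rewrite /prof eqxx; exact: region_corner_le selection_region k.
Qed.

Lemma ulim_le_corner v :
  ulim bnd p w B i v bi s <= ulim bnd p w B i v (region_corner X) (corner_perm X bi s).
Proof. by rewrite !ulimE; apply: Ebid_le => c; exact: tie_utility_corner_ge. Qed.

End Selection.

Lemma ulim_le_uOPT v b s : ulim bnd p w B i v b s <= uOPT bnd p w B i v b.
Proof. exact: le_bigmax. Qed.

Lemma exists_best_cell_vertex v : exists2 bstar : bidR,
    is_cell_vertex bnd w B i bstar &
    forall bi s, bid_nonneg bi -> ulim bnd p w B i v bi s <= uOPT bnd p w B i v bstar.
Proof.
pose is_sel X := `[< exists bi s, tie_selection X bi s >].
have [X0 X0sel] : exists X0, tie_selection X0 0 1%g.
  by apply: tie_selection_exists => k; rewrite mxE.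
have is_sel_X0 : is_sel X0 by apply/asboolP; exists 0, 1%g.
have [X /asboolP[bi [s Xsel]] Xbest] :=
  @arg_maxP _ _ _ X0 is_sel (fun X => uOPT bnd p w B i v (region_corner X)) is_sel_X0.
exists (region_corner X); first exact: selection_corner_cell_vertex Xsel.
move=> b s' b_ge0; have [Y Ysel] := tie_selection_exists b s' b_ge0.
apply: le_trans (ulim_le_corner Ysel v) _.
apply: le_trans (ulim_le_uOPT _ _ _) (Xbest Y _).
by apply/asboolP; exists b, s'.
Qed.

End Auction.

Theorem lemma4 (R : realType) (M : finType) (n r m : nat)
  (bnd : 'I_n -> 'I_r -> {set M})
  (p : 'I_n -> profile R n r -> alloc n r -> R)
  (w : 'I_n -> 'I_m.+1 -> R) (B : 'I_n -> 'I_m.+1 -> bid R r) :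
  payment_le_bid bnd p ->
  nondecreasing_payment bnd p ->
  bid_distributions w B ->
  forall (i : 'I_n) (v : {set M} -> R), valuation v ->
  exists bstar : bid R r,
    is_cell_vertex bnd w B i bstar /\
    forall bi : bid R r, bid_nonneg bi ->
      uOPT bnd p w B i v bi <= uOPT bnd p w B i v bstar.
Proof.
move=> _ p_nondecr B_dist i v _.
have [bstar bstar_vertex bstar_best] := exists_best_cell_vertex i B_dist p_nondecr v.
exists bstar; split=> // bi bi_ge0.
by apply: bigmax_le => [|s _]; exact: bstar_best.
Qed.
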